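(* Let $\pi=\langle t,a,b\mid t^{-1}at=a^2,\ t^{-1}b^2t=b\rangle$ and let $\phi\colon\pi\to\mathbb{Z}$ be the epimorphism with $\phi(t)=1$ and $\phi(a)=\phi(b)=0$ (a generator of $H^1(\pi;\mathbb{Z})\cong\mathbb{Z}$). Then $\operatorname{rg}(\pi,\phi)=0$, but $\pi$ cannot be written as an ascending or descending HNN extension of a finitely generated group compatible with $\phi$ (i.e. as $\langle B,t'\mid t'^{-1}A_+t'=A_-\rangle$ with $B$ finitely generated, $A_+=B$ or $A_-=B$, $\phi(t')=1$ and $\phi(B)=0$).
   Context: For a group $H$, $\operatorname{rk}(H)$ is the minimal number of generators. For finitely generated $G$ and a surjective homomorphism $\phi\colon G\to\mathbb{Z}$, with $G_i=\operatorname{Ker}(G\xrightarrow{\phi}\mathbb{Z}\to\mathbb{Z}/i)$, the rank gradient is $\operatorname{rg}(G,\phi)=\liminf_{i\to\infty}\frac{\operatorname{rk}(G_i)}{[G:G_i]}$. An HNN extension $\langle B,t\mid t^{-1}A_+t=A_-\rangle$ with $A_\pm\leq B$ is ascending if $A_+=B$ and descending if $A_-=B$. *)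

From Stdlib Require Import Reals ZArith List Classical ClassicalEpsilon.
Open Scope R_scope.

Record Group := {
  carrier :> Type;
  gmul : carrier -> carrier -> carrier;
  gone : carrier;
  ginv : carrier -> carrier;
  gmul_assoc : forall x y z, gmul x (gmul y z) = gmul (gmul x y) z;
  gmul_1l : forall x, gmul gone x = x;
  gmul_1r : forall x, gmul x gone = x;
  gmul_Vl : forall x, gmul (ginv x) x = gone;
  gmul_Vr : forall x, gmul x (ginv x) = gone
}.
Arguments gmul {_} _ _.
Arguments gone {_}.
Arguments ginv {_} _.

Record Hom (G K : Group) := {
  hfun :> G -> K;
  hmul : forall x y, hfun (gmul x y) = gmul (hfun x) (hfun y)
}.
Arguments hfun {_ _} _ _.

Definition Zgroup : Group :=
  {| carrier := Z; gmul := Z.add; gone := 0%Z; ginv := Z.opp;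
     gmul_assoc := Z.add_assoc; gmul_1l := Z.add_0_l; gmul_1r := Z.add_0_r;
     gmul_Vl := Z.add_opp_diag_l; gmul_Vr := Z.add_opp_diag_r |}.

Definition is_subgroup {G : Group} (H : G -> Prop) : Prop :=
  H gone /\ (forall x y, H x -> H y -> H (gmul x y)) /\ (forall x, H x -> H (ginv x)).

Inductive gen {G : Group} (S : G -> Prop) : G -> Prop :=
| gen_in : forall s, S s -> gen S s
| gen_one : gen S gone
| gen_mul : forall x y, gen S x -> gen S y -> gen S (gmul x y)
| gen_inv : forall x, gen S x -> gen S (ginv x).

Definition generated_by {G : Group} (H : G -> Prop) (l : list G) : Prop :=
  forall x, H x <-> gen (fun y => In y l) x.

Definition finitely_generated {G : Group} (H : G -> Prop) : Prop :=
  exists l : list G, generated_by H l.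

Definition gen_by_n {G : Group} (H : G -> Prop) (n : nat) : Prop :=
  exists l : list G, length l = n /\ generated_by H l.

Definition is_rank {G : Group} (H : G -> Prop) (n : nat) : Prop :=
  gen_by_n H n /\ forall m, gen_by_n H m -> (n <= m)%nat.

(* rk H as an extended natural number: None = infinity (not f.g.) *)
Definition rk {G : Group} (H : G -> Prop) : option nat :=
  match excluded_middle_informative (exists n, is_rank H n) with
  | left p => Some (proj1_sig (constructive_indefinite_description _ p))
  | right _ => None
  end.

Definition liminf_is (u : nat -> option R) (l : R) : Prop :=
  forall eps, eps > 0 ->
    (exists N, forall n, (N <= n)%nat ->
        match u n with None => True | Some r => l - eps < r end) /\
    (forall N, exists n, (N <= n)%nat /\ exists r, u n = Some r /\ r < l + eps).

Definition Gi {G : Group} (phi : Hom G Zgroup) (i : nat) : G -> Prop :=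
  fun g => Z.divide (Z.of_nat i) (phi g).

(* rk(G_i)/[G:G_i]; for phi surjective and i >= 1, [G:G_i] = i *)
Definition rg_seq {G : Group} (phi : Hom G Zgroup) (i : nat) : option R :=
  match rk (Gi phi i) with
  | Some n => Some (INR n / INR i)
  | None => None
  end.

Definition rank_gradient_is {G : Group} (phi : Hom G Zgroup) (l : R) : Prop :=
  liminf_is (rg_seq phi) l.

(* P with elements t a b is a presentation of
   < t, a, b | t^-1 a t = a^2, t^-1 b^2 t = b > *)
Definition pi_relations {K : Group} (t a b : K) : Prop :=
  gmul (gmul (ginv t) a) t = gmul a a /\
  gmul (gmul (ginv t) (gmul b b)) t = b.

Definition is_pi_presentation (P : Group) (t a b : P) : Prop :=
  pi_relations t a b /\
  forall (K : Group) (x y z : K), pi_relations x y z ->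
    exists F : Hom P K, F t = x /\ F a = y /\ F b = z /\
      forall F' : Hom P K, F' t = x -> F' a = y -> F' b = z ->
        forall g, F' g = F g.

(* G is (internally) the HNN extension < B, s | s^-1 Ap s = Am > :
   B, Ap, Am subgroups, Ap, Am <= B, s^-1 Ap s = Am, and the natural map
   from the abstract HNN extension to G is an isomorphism, expressed by the
   universal property of the HNN extension. *)
Definition is_HNN (G : Group) (B Ap Am : G -> Prop) (s : G) : Prop :=
  is_subgroup B /\ is_subgroup Ap /\ is_subgroup Am /\
  (forall x, Ap x -> B x) /\ (forall x, Am x -> B x) /\
  (forall x, Am x <-> exists y, Ap y /\ x = gmul (gmul (ginv s) y) s) /\
  forall (K : Group) (f : G -> K) (k : K),
    (forall x y, B x -> B y -> f (gmul x y) = gmul (f x) (f y)) ->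
    (forall x, Ap x -> gmul (gmul (ginv k) (f x)) k = f (gmul (gmul (ginv s) x) s)) ->
    exists F : Hom G K, (forall x, B x -> F x = f x) /\ F s = k /\
      forall F' : Hom G K, (forall x, B x -> F' x = f x) -> F' s = k ->
        forall g, F' g = F g.

Definition asc_or_desc_HNN_compatible (G : Group) (phi : Hom G Zgroup) : Prop :=
  exists (B Ap Am : G -> Prop) (s : G),
    is_HNN G B Ap Am s /\ finitely_generated B /\
    ((forall x, Ap x <-> B x) \/ (forall x, Am x <-> B x)) /\
    phi s = 1%Z /\ (forall x, B x -> phi x = 0%Z).

(* The kernel G_(n+1) of the composite of phi with Z -> Z/(n+1) is generated by t^(n+1),
   u = t^n a t^-n and v = t^-n b t^n: t^-r a t^r is the 2^(n+r)-th power of u (r >= 0)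
   and t^-r b t^r is the 2^(n-r)-th power of v (r <= n). Hence the union of the cosets
   t^r H (0 <= r <= n) of the subgroup H they generate is stable under left
   multiplication by the generators, so it is all of pi; as phi(t^r H) = r mod n+1, this
   gives H = G_(n+1). So rk(G_i) <= 3 and the rank gradient vanishes.

   For the second part map pi to the group of affine maps x |-> 2^k x + r: t to the
   doubling, b to the unit translation and a to 1 (ascending case), or t to the halving,
   a to the unit translation and b to 1 (descending case). A finitely generated base
   B in ker phi goes to dyadic translations of bounded denominator, while conjugation by
   the stable letter (by its inverse in the descending case) maps B into B and halves
   them; so B maps trivially. The universal property of the HNN extension then makes the
   image of the stable letter centralise the whole image, but it does not commute with
   the unit translation. *)

From Stdlib Require Import Reals ZArith List Lia Lra Classical ClassicalEpsilon ProofIrrelevance Wf_nat.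

Section GroupFacts.
Variable G : Group.

Lemma inv_unique (x y : G) : gmul x y = gone -> y = ginv x.
Proof.
  intro H. rewrite <- (gmul_1l G y), <- (gmul_Vl G x), <- gmul_assoc, H, gmul_1r.
  reflexivity.
Qed.

Lemma inv_inv (x : G) : ginv (ginv x) = x.
Proof. symmetry. apply inv_unique, gmul_Vl. Qed.

Lemma inv_mul (x y : G) : ginv (gmul x y) = gmul (ginv y) (ginv x).
Proof.
  symmetry. apply inv_unique.
  rewrite gmul_assoc, <- (gmul_assoc G x y (ginv y)), gmul_Vr, gmul_1r, gmul_Vr.
  reflexivity.
Qed.

Lemma inv_one : ginv (@gone G) = gone.
Proof. symmetry. apply inv_unique, gmul_1l. Qed.

Lemma mul_cancel_l (x y z : G) : gmul x y = gmul x z -> y = z.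
Proof.
  intro H.
  rewrite <- (gmul_1l G y), <- (gmul_1l G z), <- (gmul_Vl G x), <- !gmul_assoc, H.
  reflexivity.
Qed.

Lemma mul_inv_cancel_l (x y : G) : gmul x (gmul (ginv x) y) = y.
Proof. rewrite gmul_assoc, gmul_Vr, gmul_1l. reflexivity. Qed.

Lemma inv_mul_cancel_l (x y : G) : gmul (ginv x) (gmul x y) = y.
Proof. rewrite gmul_assoc, gmul_Vl, gmul_1l. reflexivity. Qed.

Definition conj (g x : G) : G := gmul (gmul (ginv g) x) g.

Lemma conj_mul (g x y : G) : conj g (gmul x y) = gmul (conj g x) (conj g y).
Proof.
  unfold conj. rewrite !gmul_assoc, <- (gmul_assoc G _ g (ginv g)), gmul_Vr, gmul_1r.
  reflexivity.
Qed.

Lemma conj_inv (g x : G) : conj g (ginv x) = ginv (conj g x).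
Proof. unfold conj. rewrite !inv_mul, inv_inv, gmul_assoc. reflexivity. Qed.

Lemma conj1g (x : G) : conj gone x = x.
Proof. unfold conj. rewrite inv_one, gmul_1l, gmul_1r. reflexivity. Qed.

Lemma conjg1 (g : G) : conj g gone = gone.
Proof. unfold conj. rewrite gmul_1r, gmul_Vl. reflexivity. Qed.

Lemma conjgg (g : G) : conj g g = g.
Proof. unfold conj. rewrite gmul_Vl, gmul_1l. reflexivity. Qed.

Lemma conjM (g h x : G) : conj (gmul g h) x = conj h (conj g x).
Proof. unfold conj. rewrite inv_mul, !gmul_assoc. reflexivity. Qed.

Lemma conjVK (g x : G) : conj (ginv g) (conj g x) = x.
Proof. rewrite <- conjM, gmul_Vr, conj1g. reflexivity. Qed.

Lemma conj_mul_shift (g x y : G) :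
  gmul (conj g x) (gmul (ginv g) y) = gmul (ginv g) (gmul x y).
Proof.
  unfold conj. rewrite !gmul_assoc, <- (gmul_assoc G _ g (ginv g)), gmul_Vr, gmul_1r.
  reflexivity.
Qed.

Fixpoint npow (g : G) (n : nat) : G :=
  match n with O => gone | S n => gmul g (npow g n) end.

Lemma npowD (g : G) m n : npow g (m + n) = gmul (npow g m) (npow g n).
Proof.
  induction m; simpl.
  - rewrite gmul_1l. reflexivity.
  - rewrite IHm, gmul_assoc. reflexivity.
Qed.

Lemma npowSr (g : G) n : npow g (S n) = gmul (npow g n) g.
Proof. rewrite <- Nat.add_1_r, npowD. simpl. rewrite gmul_1r. reflexivity. Qed.

End GroupFacts.

Arguments conj {G} _ _.
Arguments npow {G} _ _.

Section HomFacts.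
Variables (G K : Group) (F : Hom G K).

Lemma hom_one : F gone = gone.
Proof. apply (mul_cancel_l K (F gone)). rewrite <- hmul, !gmul_1r. reflexivity. Qed.

Lemma hom_inv x : F (ginv x) = ginv (F x).
Proof. apply inv_unique. rewrite <- hmul, gmul_Vr. apply hom_one. Qed.

Lemma hom_conj g x : F (conj g x) = conj (F g) (F x).
Proof. unfold conj. rewrite !hmul, hom_inv. reflexivity. Qed.

Definition conj_hom (k : K) : Hom G K :=
  {| hfun := fun x => conj k (F x);
     hmul := fun x y => eq_trans (f_equal (conj k) (hmul _ _ F x y)) (conj_mul K _ _ _) |}.

End HomFacts.

Section Generation.
Variables (G : Group) (S : G -> Prop).

Lemma gen_subgroup : is_subgroup (gen S).
Proof. split; [|split]; constructor; assumption. Qed.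

Lemma gen_sub (H : G -> Prop) :
  is_subgroup H -> (forall s, S s -> H s) -> forall x, gen S x -> H x.
Proof.
  intros [H1 [HM HV]] HS x Hx. induction Hx; auto.
Qed.

Definition gen_carrier : Type := {x : G | gen S x}.

Lemma gen_carrier_eq (x y : gen_carrier) : proj1_sig x = proj1_sig y -> x = y.
Proof. destruct x, y; simpl; intro; subst. f_equal. apply proof_irrelevance. Qed.

Definition gen_group : Group.
Proof.
  refine {| carrier := gen_carrier;
            gmul := fun x y => exist _ (gmul (proj1_sig x) (proj1_sig y))
                                 (gen_mul S _ _ (proj2_sig x) (proj2_sig y));
            gone := exist _ gone (gen_one S);
            ginv := fun x => exist _ (ginv (proj1_sig x)) (gen_inv S _ (proj2_sig x)) |};
  intros; apply gen_carrier_eq; simpl.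
  - apply gmul_assoc.
  - apply gmul_1l.
  - apply gmul_1r.
  - apply gmul_Vl.
  - apply gmul_Vr.
Defined.

End Generation.

Definition pi_generators {P : Group} (t a b : P) : P -> Prop :=
  fun y => In y (t :: a :: b :: nil).

Lemma pi_presentation_generated (P : Group) (t a b : P) :
  is_pi_presentation P t a b -> forall g, gen (pi_generators t a b) g.
Proof.
  intros [Hrel HU] g.
  set (S := pi_generators t a b).
  assert (HS : forall y, In y (t :: a :: b :: nil) -> gen S y) by (intros; apply gen_in; assumption).
  pose (t' := exist _ t (HS t ltac:(simpl; auto)) : gen_group P S).
  pose (a' := exist _ a (HS a ltac:(simpl; auto)) : gen_group P S).
  pose (b' := exist _ b (HS b ltac:(simpl; auto)) : gen_group P S).
  assert (Hrel' : pi_relations t' a' b').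
  { destruct Hrel as [H1 H2]. split; apply gen_carrier_eq; assumption. }
  destruct (HU _ _ _ _ Hrel') as [F [Ft [Fa [Fb _]]]].
  destruct (HU P t a b Hrel) as [F0 [_ [_ [_ Huniq]]]].
  pose (back := {| hfun := fun x => proj1_sig (F x);
                   hmul := fun x y => f_equal (@proj1_sig _ _) (hmul _ _ F x y) |} : Hom P P).
  pose (id_hom := {| hfun := fun x : P => x; hmul := fun x y => eq_refl |} : Hom P P).
  assert (E1 : back g = F0 g) by (apply Huniq; simpl; [rewrite Ft | rewrite Fa | rewrite Fb]; reflexivity).
  assert (E2 : id_hom g = F0 g) by (apply Huniq; reflexivity).
  simpl in E1, E2. rewrite <- E1 in E2. rewrite E2. exact (proj2_sig (F g)).
Qed.

Lemma hom_npow_Z (G : Group) (phi : Hom G Zgroup) g r :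
  phi (npow g r) = (Z.of_nat r * phi g)%Z.
Proof.
  induction r; simpl npow.
  - apply hom_one.
  - rewrite hmul, IHr. change (phi g + Z.of_nat r * phi g = Z.of_nat (S r) * phi g)%Z. lia.
Qed.

Lemma Gi_subgroup (G : Group) (phi : Hom G Zgroup) i : is_subgroup (Gi phi i).
Proof.
  unfold Gi. split; [|split].
  - rewrite hom_one. apply Z.divide_0_r.
  - intros x y Hx Hy. rewrite hmul. apply Z.divide_add_r; assumption.
  - intros x Hx. rewrite hom_inv. apply Z.divide_opp_r. assumption.
Qed.

Section KernelGeneration.
Variables (G : Group) (phi : Hom G Zgroup) (t : G) (n : nat) (H : G -> Prop).
Hypothesis phi_t : phi t = 1%Z.
Hypothesis H_subgroup : is_subgroup H.
Hypothesis H_sub_Gi : forall x, H x -> Gi phi (S n) x.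
Hypothesis H_tpow : H (npow t (S n)).

Definition coset_rep (x : G) : Prop :=
  exists r, (r <= n)%nat /\ H (gmul (ginv (npow t r)) x).

Lemma coset_rep_mul g y :
  (forall r, (r <= n)%nat -> H (conj (npow t r) g)) -> coset_rep y ->
  coset_rep (gmul g y) /\ coset_rep (gmul (ginv g) y).
Proof.
  destruct H_subgroup as [_ [HM HV]].
  intros Hg [r [Hr Hy]]. split; exists r; split; auto;
    rewrite <- conj_mul_shift; [|rewrite conj_inv]; auto.
Qed.

Lemma coset_rep_mul_t y :
  coset_rep y -> coset_rep (gmul t y) /\ coset_rep (gmul (ginv t) y).
Proof.
  destruct H_subgroup as [_ [HM HV]].
  intros [r [Hr Hy]]. split.
  - destruct (Nat.eq_dec r n) as [-> | Hrn].
    + exists 0%nat. split; [lia|]. simpl. rewrite inv_one, gmul_1l.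
      replace (gmul t y) with (gmul (npow t (S n)) (gmul (ginv (npow t n)) y)); auto.
      simpl. rewrite <- gmul_assoc, mul_inv_cancel_l. reflexivity.
    + exists (S r). split; [lia|]. simpl.
      rewrite inv_mul, <- gmul_assoc, inv_mul_cancel_l. exact Hy.
  - destruct r as [|r].
    + exists n. split; [lia|]. simpl in Hy. rewrite inv_one, gmul_1l in Hy.
      rewrite gmul_assoc, <- inv_mul. change (H (gmul (ginv (npow t (S n))) y)). auto.
    + exists r. split; [lia|]. rewrite gmul_assoc, <- inv_mul. exact Hy.
Qed.

Lemma coset_rep_all (X : G -> Prop) :
  (forall g, gen X g) ->
  (forall x, X x -> x = t \/ forall r, (r <= n)%nat -> H (conj (npow t r) x)) ->
  forall x, coset_rep x.
Proof.
  intros HX Hgen.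
  assert (Hleft : forall g y, coset_rep y <-> coset_rep (gmul g y)).
  { intro g. induction (HX g) as [s Hs| |g1 g2 _ IH1 _ IH2|g _ IH]; intro y.
    - assert (Hs' : forall y, coset_rep y -> coset_rep (gmul s y) /\ coset_rep (gmul (ginv s) y)).
      { destruct (Hgen s Hs) as [-> | Hconj]; [apply coset_rep_mul_t | intro; apply coset_rep_mul; auto]. }
      split; intro Hy; [apply Hs'; auto|].
      rewrite <- (inv_mul_cancel_l G s y). apply Hs'. assumption.
    - rewrite gmul_1l. tauto.
    - rewrite <- gmul_assoc, <- IH1, <- IH2. tauto.
    - rewrite (IH (gmul (ginv g) y)), mul_inv_cancel_l. tauto. }
  intro x. rewrite <- (gmul_1r G x). apply Hleft.
  exists 0%nat. split; [lia|]. simpl. rewrite inv_one, gmul_1l. exact (proj1 H_subgroup).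
Qed.

Lemma Gi_sub_of_coset_reps (X : G -> Prop) :
  (forall g, gen X g) ->
  (forall x, X x -> x = t \/ forall r, (r <= n)%nat -> H (conj (npow t r) x)) ->
  forall x, Gi phi (S n) x -> H x.
Proof.
  intros HX Hgen x Hx.
  destruct (coset_rep_all X HX Hgen x) as [r [Hr Hh]].
  assert (Hd := H_sub_Gi _ Hh). unfold Gi in Hd, Hx.
  rewrite hmul, hom_inv, hom_npow_Z, phi_t in Hd. simpl in Hd.
  assert (Hdr : Z.divide (Z.of_nat (S n)) (Z.of_nat r)).
  { replace (Z.of_nat r) with (phi x - (- (Z.of_nat r * 1) + phi x))%Z by lia.
    apply Z.divide_sub_r; assumption. }
  destruct r as [|r].
  - simpl in Hh. rewrite inv_one, gmul_1l in Hh. exact Hh.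
  - apply Z.divide_pos_le in Hdr; lia.
Qed.

End KernelGeneration.

Lemma npow_inv_comm (G : Group) (g : G) n :
  gmul (ginv (npow g n)) g = gmul g (ginv (npow g n)).
Proof.
  apply (mul_cancel_l G (npow g n)).
  rewrite mul_inv_cancel_l, gmul_assoc, <- npowSr. simpl.
  rewrite <- gmul_assoc, gmul_Vr, gmul_1r. reflexivity.
Qed.

Section PiKernels.
Variables (P : Group) (t a b : P) (phi : Hom P Zgroup) (n : nat).
Hypothesis HP : is_pi_presentation P t a b.
Hypothesis phi_t : phi t = 1%Z.
Hypothesis phi_a : phi a = 0%Z.
Hypothesis phi_b : phi b = 0%Z.

Definition kernel_gen_u : P := conj (ginv (npow t n)) a.
Definition kernel_gen_v : P := conj (npow t n) b.
Definition kernel_gens : list P := npow t (S n) :: kernel_gen_u :: kernel_gen_v :: nil.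

Let Kspan := gen (fun y => In y kernel_gens).
Let u := kernel_gen_u.
Let v := kernel_gen_v.

Lemma Kspan_u : Kspan u. Proof. apply gen_in. simpl. auto. Qed.
Lemma Kspan_v : Kspan v. Proof. apply gen_in. simpl. auto. Qed.

Lemma conj_t_a : conj t a = gmul a a.
Proof. exact (proj1 (proj1 HP)). Qed.

Lemma conj_t_bb : conj t (gmul b b) = b.
Proof. exact (proj2 (proj1 HP)). Qed.

Lemma conj_t_u : conj t u = gmul u u.
Proof.
  unfold u, kernel_gen_u. rewrite <- conjM, npow_inv_comm, conjM, conj_t_a, conj_mul.
  reflexivity.
Qed.

Lemma Kspan_conj_u k : Kspan (conj (npow t k) u).
Proof.
  induction k; simpl npow.
  - rewrite conj1g. apply Kspan_u.
  - rewrite conjM, conj_t_u, conj_mul. apply gen_mul; assumption.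
Qed.

Lemma Kspan_conj_a r : Kspan (conj (npow t r) a).
Proof.
  replace a with (conj (npow t n) u)
    by (unfold u, kernel_gen_u; rewrite <- conjM, gmul_Vl, conj1g; reflexivity).
  rewrite <- conjM, <- npowD. apply Kspan_conj_u.
Qed.

Lemma conj_t_pow_b_sq k :
  gmul (conj (npow t (S k)) b) (conj (npow t (S k)) b) = conj (npow t k) b.
Proof. rewrite <- conj_mul. simpl npow. rewrite conjM, conj_t_bb. reflexivity. Qed.

Lemma Kspan_conj_b r : (r <= n)%nat -> Kspan (conj (npow t r) b).
Proof.
  intro Hr. replace r with (n - (n - r))%nat by lia.
  induction (n - r)%nat as [|j IH].
  - rewrite Nat.sub_0_r. apply Kspan_v.
  - destruct (Nat.le_gt_cases n j) as [Hj | Hj].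
    + replace (n - S j)%nat with (n - j)%nat by lia. exact IH.
    + rewrite <- conj_t_pow_b_sq. replace (S (n - S j)) with (n - j)%nat by lia.
      apply gen_mul; exact IH.
Qed.

Lemma Kspan_sub_Gi x : Kspan x -> Gi phi (S n) x.
Proof.
  apply gen_sub; [apply Gi_subgroup|]. unfold Gi.
  intros s [<- | [<- | [<- | []]]].
  - rewrite hom_npow_Z, phi_t. exists 1%Z. lia.
  - unfold kernel_gen_u. rewrite hom_conj. simpl. rewrite phi_a. exists 0%Z. lia.
  - unfold kernel_gen_v. rewrite hom_conj. simpl. rewrite phi_b. exists 0%Z. lia.
Qed.

Lemma Gi_generated : generated_by (Gi phi (S n)) kernel_gens.
Proof.
  intro x. split; [|apply Kspan_sub_Gi].
  apply (Gi_sub_of_coset_reps P phi t n Kspan phi_t (gen_subgroup P _) Kspan_sub_Gi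
           ltac:(apply gen_in; simpl; auto) (pi_generators t a b)
           (pi_presentation_generated P t a b HP)).
  intros s [<- | [<- | [<- | []]]]; auto; right; intros r Hr.
  - apply Kspan_conj_a.
  - apply Kspan_conj_b. assumption.
Qed.

End PiKernels.

Lemma rk_le (G : Group) (H : G -> Prop) k :
  gen_by_n H k -> exists m, rk H = Some m /\ (m <= k)%nat.
Proof.
  intro Hk. unfold rk.
  destruct (excluded_middle_informative _) as [Hex | Hnex].
  - destruct (constructive_indefinite_description _ Hex) as [m Hm]. simpl.
    exists m. split; [reflexivity|]. apply Hm, Hk.
  - exfalso. apply Hnex.
    destruct (dec_inh_nat_subset_has_unique_least_element (gen_by_n H)
                (fun m => classic _) (ex_intro _ k Hk)) as [m [[Hm Hmin] _]].
    exists m. split; assumption.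
Qed.

Lemma rank_gradient_zero_of_bounded_rank (G : Group) (phi : Hom G Zgroup) (C : nat) :
  (forall i, (1 <= i)%nat -> exists m, rk (Gi phi i) = Some m /\ (m <= C)%nat) ->
  rank_gradient_is phi 0.
Proof.
  intros Hbound eps Heps. split.
  - exists 1%nat. intros i Hi. unfold rg_seq. destruct (rk (Gi phi i)) as [m|]; [|exact I].
    assert (0 <= INR m / INR i).
    { unfold Rdiv. apply Rmult_le_pos; [apply pos_INR | apply Rlt_le, Rinv_0_lt_compat].
      apply lt_0_INR. lia. }
    lra.
  - intro N. destruct (archimed_cor1 eps Heps) as [N0 [HN0 HN0pos]].
    (* C / i <= C / ((C + 1) N0) < 1 / N0 < eps *)
    set (i := (N + S C * N0)%nat).
    exists i. split; [lia|].
    destruct (Hbound i ltac:(lia)) as [m [Hm HmC]].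
    unfold rg_seq. rewrite Hm. eexists. split; [reflexivity|].
    assert (HmC' : INR m <= INR C) by (apply le_INR; assumption).
    assert (Hi : INR (S C) * INR N0 <= INR i).
    { rewrite <- mult_INR. apply le_INR. lia. }
    assert (HN0' : 0 < INR N0) by (apply lt_0_INR; assumption).
    assert (Heps' : 1 < eps * INR N0).
    { apply (Rmult_lt_compat_r (INR N0)) in HN0; [|assumption].
      rewrite Rinv_l in HN0; lra. }
    rewrite S_INR in Hi.
    assert (0 <= INR C) by apply pos_INR.
    apply (Rmult_lt_reg_r (INR i)); [nra|].
    unfold Rdiv. rewrite Rmult_assoc, Rinv_l by nra. nra.
Qed.

Lemma pi_rank_gradient_zero (P : Group) (t a b : P) (phi : Hom P Zgroup) :
  is_pi_presentation P t a b -> phi t = 1%Z -> phi a = 0%Z -> phi b = 0%Z ->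
  rank_gradient_is phi 0.
Proof.
  intros HP Ht Ha Hb. apply (rank_gradient_zero_of_bounded_rank P phi 3).
  intros [|n] Hi; [lia|]. apply rk_le.
  exists (kernel_gens P t a b n). split; [reflexivity|].
  apply Gi_generated; assumption.
Qed.

Lemma two_neq0 : 2 <> 0.
Proof. lra. Qed.

(* (r, k) stands for the affine map x |-> 2^k x + r of the real line; aff_mul is composition. *)
Definition aff_mul (p q : R * Z) : R * Z :=
  (fst p + powerRZ 2 (snd p) * fst q, (snd p + snd q)%Z).
Definition aff_inv (p : R * Z) : R * Z :=
  (- (powerRZ 2 (- snd p) * fst p), (- snd p)%Z).

Definition Aff2 : Group.
Proof.
  refine {| carrier := (R * Z)%type; gmul := aff_mul; gone := (0, 0%Z); ginv := aff_inv |};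
  unfold aff_mul, aff_inv; simpl.
  - intros [r1 n1] [r2 n2] [r3 n3]. simpl. f_equal; [|lia].
    rewrite powerRZ_add by apply two_neq0. ring.
  - intros [r n]. simpl. f_equal. ring.
  - intros [r n]. simpl. f_equal; [ring | lia].
  - intros [r n]. simpl. f_equal; [ring | lia].
  - intros [r n]. simpl. f_equal; [|lia].
    replace (powerRZ 2 n * - (powerRZ 2 (- n) * r)) with (- (powerRZ 2 (n + - n) * r))
      by (rewrite powerRZ_add by apply two_neq0; ring).
    rewrite Z.add_opp_diag_r. simpl. ring.
Defined.

Lemma aff_conj_translation c k r :
  conj ((c, k) : Aff2) (r, 0%Z) = (r * powerRZ 2 (- k), 0%Z).
Proof.
  unfold conj. simpl. unfold aff_mul, aff_inv. simpl. f_equal; [|lia].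
  rewrite Z.add_0_r. ring.
Qed.

Lemma powerRZ2_eq1 k : powerRZ 2 k = 1 -> k = 0%Z.
Proof.
  assert (Hgt : forall p, 1 < powerRZ 2 (Z.pos p)).
  { intro p. simpl. apply Rlt_pow_R1; [lra | apply Pos2Nat.is_pos]. }
  destruct k as [|p|p]; intro Hk; [reflexivity| |].
  - specialize (Hgt p). lra.
  - specialize (Hgt p). rewrite <- Pos2Z.opp_pos, powerRZ_neg' in Hk.
    rewrite <- Rinv_1 in Hk. apply Rinv_eq_reg in Hk. lra.
Qed.

Lemma aff_translation_centralizer c k :
  conj ((c, k) : Aff2) (1, 0%Z) = (1, 0%Z) -> k = 0%Z.
Proof.
  rewrite aff_conj_translation. intro Hk. injection Hk as Hk.
  apply Z.opp_inj. apply powerRZ2_eq1. lra.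
Qed.

Definition is_int (r : R) : Prop := exists z, r = IZR z.
Definition dyadic (y : R) : Prop := exists m : nat, is_int (y * 2 ^ m).

Lemma is_int_plus x y : is_int x -> is_int y -> is_int (x + y).
Proof. intros [m ->] [n ->]. exists (m + n)%Z. symmetry; apply plus_IZR. Qed.

Lemma is_int_mult x y : is_int x -> is_int y -> is_int (x * y).
Proof. intros [m ->] [n ->]. exists (m * n)%Z. symmetry; apply mult_IZR. Qed.

Lemma is_int_opp x : is_int x -> is_int (- x).
Proof. intros [m ->]. exists (- m)%Z. symmetry; apply opp_IZR. Qed.

Lemma is_int_pow2 k : is_int (2 ^ k).
Proof. exists (2 ^ Z.of_nat k)%Z. rewrite <- pow_IZR. reflexivity. Qed.

Lemma is_int_mul_pow2 y m k : is_int (y * 2 ^ m) -> is_int (y * 2 ^ (m + k)).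
Proof.
  intro H. rewrite pow_add, <- Rmult_assoc. apply is_int_mult; [exact H | apply is_int_pow2].
Qed.

Lemma dyadic_plus x y : dyadic x -> dyadic y -> dyadic (x + y).
Proof.
  intros [m Hm] [n Hn]. exists (m + n)%nat. rewrite Rmult_plus_distr_r.
  apply is_int_plus; [|rewrite Nat.add_comm]; apply is_int_mul_pow2; assumption.
Qed.

Lemma dyadic_opp x : dyadic x -> dyadic (- x).
Proof.
  intros [m Hm]. exists m. rewrite Ropp_mult_distr_l_reverse. apply is_int_opp, Hm.
Qed.

Lemma dyadic_powerRZ2_mul k x : dyadic x -> dyadic (powerRZ 2 k * x).
Proof.
  intros [m Hm]. destruct k as [|p|p]; simpl.
  - exists m. rewrite Rmult_1_l. exact Hm.
  - exists m. rewrite Rmult_assoc. apply is_int_mult; [apply is_int_pow2 | exact Hm].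
  - exists (m + Pos.to_nat p)%nat. rewrite pow_add.
    replace (/ 2 ^ Pos.to_nat p * x * (2 ^ m * 2 ^ Pos.to_nat p)) with (x * 2 ^ m); [exact Hm|].
    field. apply pow_nonzero, two_neq0.
Qed.

Lemma dyadic_IZR z : dyadic (IZR z).
Proof. exists 0%nat, z. simpl. ring. Qed.

Lemma dyadic_subgroup (G : Group) (psi : Hom G Aff2) :
  is_subgroup (fun x => dyadic (fst (psi x))).
Proof.
  split; [|split].
  - rewrite hom_one. apply (dyadic_IZR 0).
  - intros x y Hx Hy. rewrite hmul. apply dyadic_plus, dyadic_powerRZ2_mul; assumption.
  - intros x Hx. rewrite hom_inv. apply dyadic_opp, dyadic_powerRZ2_mul, Hx.
Qed.

Lemma degree_subgroup (G : Group) (psi : Hom G Aff2) (phi : Hom G Zgroup) k :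
  is_subgroup (fun x => snd (psi x) = (k * phi x)%Z).
Proof.
  split; [|split].
  - rewrite !hom_one. simpl. lia.
  - intros x y Hx Hy. rewrite !hmul. simpl. lia.
  - intros x Hx. rewrite !hom_inv. simpl. lia.
Qed.

Lemma bounded_translation_subgroup (G : Group) (psi : Hom G Aff2) M :
  is_subgroup (fun x => snd (psi x) = 0%Z /\ is_int (fst (psi x) * 2 ^ M)).
Proof.
  split; [|split].
  - rewrite hom_one. split; [reflexivity|]. exists 0%Z. simpl. ring.
  - intros x y [Hx0 Hx] [Hy0 Hy]. rewrite hmul. simpl. rewrite Hx0, Hy0.
    split; [reflexivity|]. simpl. rewrite Rmult_1_l, Rmult_plus_distr_r.
    apply is_int_plus; assumption.
  - intros x [Hx0 Hx]. rewrite hom_inv. simpl. rewrite Hx0.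
    split; [reflexivity|]. simpl. rewrite Rmult_1_l, Ropp_mult_distr_l_reverse.
    apply is_int_opp, Hx.
Qed.

Lemma dyadic_common_denominator {A : Type} (f : A -> R) (l : list A) :
  (forall y, In y l -> dyadic (f y)) -> exists M, forall y, In y l -> is_int (f y * 2 ^ M).
Proof.
  induction l as [|x l IH]; intro H.
  - exists 0%nat. intros y [].
  - destruct IH as [M HM]; [intros; apply H; simpl; auto|].
    destruct (H x (or_introl eq_refl)) as [m Hm].
    exists (M + m)%nat. intros y [<- | Hy].
    + rewrite Nat.add_comm. apply is_int_mul_pow2, Hm.
    + apply is_int_mul_pow2, HM, Hy.
Qed.

Lemma fg_translations_bounded_denominator (G : Group) (B : G -> Prop) (psi : Hom G Aff2) :
  finitely_generated B ->
  (forall x, B x -> dyadic (fst (psi x))) -> (forall x, B x -> snd (psi x) = 0%Z) ->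
  exists M, forall x, B x -> is_int (fst (psi x) * 2 ^ M).
Proof.
  intros [l Hl] Hdy Hdeg.
  destruct (dyadic_common_denominator (fun y => fst (psi y)) l) as [M HM].
  { intros y Hy. apply Hdy, Hl, gen_in, Hy. }
  exists M. intros x Bx. apply Hl in Bx.
  apply (gen_sub G _ _ (bounded_translation_subgroup G psi M)) in Bx; [apply Bx|].
  intros y Hy. split; [apply Hdeg, Hl, gen_in, Hy | apply HM, Hy].
Qed.

Lemma Z_eq0_of_pow2_divisible z : (forall k : nat, (2 ^ Z.of_nat k | z)%Z) -> z = 0%Z.
Proof.
  intro H. destruct (Z.eq_dec z 0) as [|Hz]; [assumption|exfalso].
  specialize (H (Z.to_nat (Z.abs z))). rewrite Z2Nat.id in H by lia.
  apply Z.divide_abs_r, Z.divide_pos_le in H; [|lia].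
  assert (Z.abs z < 2 ^ Z.abs z)%Z by (apply Z.pow_gt_lin_r; lia). lia.
Qed.

Lemma halving_closed_bounded_denominator (Y : R -> Prop) M :
  (forall y, Y y -> is_int (y * 2 ^ M)) -> (forall y, Y y -> Y (y / 2)) ->
  forall y, Y y -> y = 0.
Proof.
  intros Hint Hhalf y Hy.
  assert (Hiter : forall k, Y (y / 2 ^ k)).
  { induction k; simpl.
    - replace (y / 1) with y by field. exact Hy.
    - replace (y / (2 * 2 ^ k)) with (y / 2 ^ k / 2) by (field; apply pow_nonzero, two_neq0).
      apply Hhalf, IHk. }
  destruct (Hint y Hy) as [z Hz].
  assert (z = 0%Z) as ->.
  { apply Z_eq0_of_pow2_divisible. intro k.
    destruct (Hint _ (Hiter k)) as [w Hw]. exists w. apply eq_IZR.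
    rewrite mult_IZR, <- Hz, <- pow_IZR, <- Hw. field. apply pow_nonzero, two_neq0. }
  apply (Rmult_eq_reg_r (2 ^ M)); [|apply pow_nonzero, two_neq0].
  rewrite Hz. simpl. ring.
Qed.

Lemma fg_halved_translations_trivial (G : Group) (B : G -> Prop) (psi : Hom G Aff2) (e : G) :
  finitely_generated B ->
  (forall x, B x -> dyadic (fst (psi x))) -> (forall x, B x -> snd (psi x) = 0%Z) ->
  (forall x, B x -> B (conj e x)) -> snd (psi e) = 1%Z ->
  forall x, B x -> psi x = gone.
Proof.
  intros Bfg Hdy Hdeg HBe He.
  destruct (fg_translations_bounded_denominator G B psi Bfg Hdy Hdeg) as [M HM].
  assert (Hzero := halving_closed_bounded_denominator
                     (fun y => exists x, B x /\ fst (psi x) = y) M).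
  intros x Bx. assert (Hx := Hdeg x Bx).
  destruct (psi x) as [r k] eqn:Ex. simpl in Hx. subst k.
  replace r with 0; [reflexivity|]. symmetry. apply Hzero; [| |exists x; rewrite Ex; auto].
  - intros y [z [Bz <-]]. apply HM, Bz.
  - intros y [z [Bz <-]]. exists (conj e z). split; [apply HBe, Bz|].
    rewrite hom_conj. destruct (psi e) as [c k]. simpl in He. subst k.
    assert (Hz := Hdeg z Bz). destruct (psi z) as [s k]. simpl in Hz. subst k.
    rewrite aff_conj_translation. simpl. field.
Qed.

Lemma HNN_stable_letter_centralizes (G K : Group) (B Ap Am : G -> Prop) (s : G) (F : Hom G K) :
  is_HNN G B Ap Am s -> (forall x, B x -> conj (F s) (F x) = F x) ->
  forall g, conj (F s) (F g) = F g.
Proof.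
  intros [_ [_ [_ [_ [_ [_ HU]]]]]] Hcent g.
  destruct (HU K F (F s)) as [F0 [_ [_ Huniq]]].
  - intros. apply hmul.
  - intros x _. exact (eq_sym (hom_conj G K F s x)).
  - assert (E1 := Huniq F (fun _ _ => eq_refl) eq_refl g).
    assert (E2 := Huniq (conj_hom G K F (F s)) Hcent (conjgg K (F s)) g).
    simpl in E2. congruence.
Qed.

Lemma affine_rep_obstructs_HNN (G : Group) (B Ap Am : G -> Prop) (s e g : G) (psi : Hom G Aff2) :
  is_HNN G B Ap Am s -> finitely_generated B ->
  (forall x, dyadic (fst (psi x))) -> (forall x, B x -> snd (psi x) = 0%Z) ->
  (forall x, B x -> B (conj e x)) -> snd (psi e) = 1%Z ->
  snd (psi s) <> 0%Z -> psi g = (1, 0%Z) -> False.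
Proof.
  intros HNN Bfg Hdy Hdeg HBe He Hs Hg.
  assert (Htriv := fg_halved_translations_trivial G B psi e Bfg (fun x _ => Hdy x) Hdeg HBe He).
  assert (Hcent := HNN_stable_letter_centralizes G Aff2 B Ap Am s psi HNN).
  specialize (Hcent ltac:(intros x Bx; rewrite (Htriv x Bx); apply conjg1) g).
  rewrite Hg in Hcent. destruct (psi s) as [c k]. apply Hs, (aff_translation_centralizer c), Hcent.
Qed.

Lemma pi_affine_rep (P : Group) (t a b : P) (phi : Hom P Zgroup) (k : Z) (t' a' b' : Aff2) :
  is_pi_presentation P t a b -> pi_relations t' a' b' ->
  dyadic (fst t') -> dyadic (fst a') -> dyadic (fst b') ->
  snd t' = (k * phi t)%Z -> snd a' = (k * phi a)%Z -> snd b' = (k * phi b)%Z ->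
  exists psi : Hom P Aff2, psi t = t' /\ psi a = a' /\ psi b = b' /\
    (forall x, dyadic (fst (psi x))) /\ (forall x, snd (psi x) = (k * phi x)%Z).
Proof.
  intros HP Hrel Hdt Hda Hdb Hkt Hka Hkb.
  destruct (proj2 HP _ _ _ _ Hrel) as [psi [Pt [Pa [Pb _]]]].
  exists psi. do 3 (split; [assumption|]).
  assert (Hgen := pi_presentation_generated P t a b HP).
  split; intro x.
  - apply (gen_sub P (pi_generators t a b) _ (dyadic_subgroup P psi)); [|apply Hgen].
    intros y [<- | [<- | [<- | []]]]; [rewrite Pt | rewrite Pa | rewrite Pb]; assumption.
  - apply (gen_sub P (pi_generators t a b) _ (degree_subgroup P psi phi k)); [|apply Hgen].
    intros y [<- | [<- | [<- | []]]]; [rewrite Pt | rewrite Pa | rewrite Pb]; assumption.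
Qed.

Lemma pi_not_asc_desc_HNN (P : Group) (t a b : P) (phi : Hom P Zgroup) :
  is_pi_presentation P t a b -> phi t = 1%Z -> phi a = 0%Z -> phi b = 0%Z ->
  ~ asc_or_desc_HNN_compatible P phi.
Proof.
  intros HP Ht Ha Hb [B [Ap [Am [s [HNN [Bfg [[Hasc | Hdesc] [Hs HB]]]]]]]];
  assert (HNN' := HNN); destruct HNN' as [_ [_ [_ [ApB [AmB [Hconj _]]]]]].
  - assert (Hrel : pi_relations ((0, 1%Z) : Aff2) (0, 0%Z) (1, 0%Z))
      by (split; simpl; unfold aff_mul, aff_inv; simpl; f_equal; field).
    destruct (pi_affine_rep P t a b phi 1 _ _ _ HP Hrel) as [psi [_ [_ [Pb [Hdy Hdeg]]]]];
      try apply dyadic_IZR; try (cbn [snd]; rewrite ?Ht, ?Ha, ?Hb; reflexivity).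
    apply (affine_rep_obstructs_HNN P B Ap Am s s b psi HNN Bfg Hdy).
    + intros x Bx. rewrite Hdeg, HB by exact Bx. reflexivity.
    + intros x Bx. apply AmB, Hconj. exists x. split; [apply Hasc, Bx | reflexivity].
    + rewrite Hdeg, Hs. reflexivity.
    + rewrite Hdeg, Hs. discriminate.
    + exact Pb.
  - assert (Hrel : pi_relations ((0, (-1)%Z) : Aff2) (1, 0%Z) (0, 0%Z))
      by (split; simpl; unfold aff_mul, aff_inv; simpl; f_equal; field).
    destruct (pi_affine_rep P t a b phi (-1) _ _ _ HP Hrel) as [psi [_ [Pa [_ [Hdy Hdeg]]]]];
      try apply dyadic_IZR; try (cbn [snd]; rewrite ?Ht, ?Ha, ?Hb; reflexivity).
    apply (affine_rep_obstructs_HNN P B Ap Am s (ginv s) a psi HNN Bfg Hdy).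
    + intros x Bx. rewrite Hdeg, HB by exact Bx. reflexivity.
    + intros x Bx. apply Hdesc, Hconj in Bx. destruct Bx as [y [Apy ->]].
      change (B (conj (ginv s) (conj s y))). rewrite conjVK. apply ApB, Apy.
    + rewrite Hdeg, hom_inv, Hs. reflexivity.
    + rewrite Hdeg, Hs. discriminate.
    + exact Pa.
Qed.

Theorem proposition4p2 (P : Group) (t a b : P) (phi : Hom P Zgroup) :
  is_pi_presentation P t a b ->
  phi t = 1%Z -> phi a = 0%Z -> phi b = 0%Z ->
  rank_gradient_is phi 0%R /\ ~ asc_or_desc_HNN_compatible P phi.
Proof.
  intros HP Ht Ha Hb. split.
  - apply (pi_rank_gradient_zero P t a b); assumption.
  - apply (pi_not_asc_desc_HNN P t a b); assumption.
Qed.
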